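(* Let $P\subset\mathbb{R}^d$ be a $(0,1)$-polytope. Then, after a change of coordinates, $P=P_1\times\cdots\times P_s$ for some indecomposable $(0,1)$-polytopes $P_1,\ldots,P_s$.
   Context: A $(0,1)$-polytope is a polytope all of whose vertices lie in $\{0,1\}^d$. A lattice polytope is (Minkowski) indecomposable if it is not a single point and whenever it equals $P_1+P_2$ (Minkowski sum) with $P_1,P_2$ lattice polytopes, one of $P_1,P_2$ is a single point. $\times$ denotes direct product of polytopes; a Minkowski sum $P'+Q'$ of polytopes in $\mathbb{R}^d$ such that, for every coordinate $i$, the projection of $P'$ or of $Q'$ to the $i$-th coordinate is $\{0\}$, is regarded as the direct product of these polytopes (in the respective coordinate subspaces). *)

From HB Require Import structures.
From mathcomp Require Import all_boot all_order all_algebra all_fingroup.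
From mathcomp Require Import reals.
Set Implicit Arguments. Unset Strict Implicit. Unset Printing Implicit Defensive.
Import Order.TTheory GRing.Theory Num.Theory.
Local Open Scope ring_scope.

Section Defs.
Variables (R : realType) (d : nat).
Notation pt := 'rV[R]_d.

Definition conv (S : seq pt) : pt -> Prop :=
  fun x => exists lam : 'I_(size S) -> R,
    (forall i, 0 <= lam i) /\ \sum_i lam i = 1 /\
    x = \sum_i lam i *: S`_(val i).

Definition lattice_point (x : pt) : Prop :=
  forall i : 'I_d, exists z : int, x ord0 i = z%:~R.

Definition zero_one_point (x : pt) : Prop :=
  forall i : 'I_d, x ord0 i = 0 \/ x ord0 i = 1.

Definition lattice_polytope (P : pt -> Prop) : Prop :=
  exists S : seq pt, S <> [::] /\ (forall v, v \in S -> lattice_point v) /\ P = conv S.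

Definition zero_one_polytope (P : pt -> Prop) : Prop :=
  exists S : seq pt, S <> [::] /\ (forall v, v \in S -> zero_one_point v) /\ P = conv S.

Definition minkowski (P Q : pt -> Prop) : pt -> Prop :=
  fun x => exists p q, P p /\ Q q /\ x = p + q.

Definition is_single_point (P : pt -> Prop) : Prop :=
  exists v : pt, P = (fun x => x = v).

Definition indecomposable (P : pt -> Prop) : Prop :=
  lattice_polytope P /\ ~ is_single_point P /\
  forall P1 P2, lattice_polytope P1 -> lattice_polytope P2 ->
    P = minkowski P1 P2 -> is_single_point P1 \/ is_single_point P2.

Definition minkowski_list (Ps : seq (pt -> Prop)) : pt -> Prop :=
  foldr minkowski (fun x => x = 0) Ps.

(* Projection of P to the i-th coordinate is {0} (P nonempty in our uses). *)
Definition proj_zero (P : pt -> Prop) (i : 'I_d) : Prop :=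
  forall x, P x -> x ord0 i = 0.

(* Direct product P_1 x ... x P_s, in the paper's convention: the Minkowski
   sum of the P_j where, for every coordinate i, at most one P_j has
   projection to coordinate i different from {0}. *)
Definition is_direct_product (P : pt -> Prop) (Ps : seq (pt -> Prop)) : Prop :=
  (forall j k : nat, (j < size Ps)%N -> (k < size Ps)%N -> j <> k ->
     forall i : 'I_d, proj_zero (nth (fun _ => False) Ps j) i \/
                      proj_zero (nth (fun _ => False) Ps k) i) /\
  P = minkowski_list Ps.

(* Changes of coordinates of the cube: permutation of coordinates composed
   with reflections x_i |-> 1 - x_i. *)
Definition coord_change (s : 'S_d) (flip : 'I_d -> bool) (x : pt) : pt :=
  \row_i (if flip i then 1 - x ord0 (s i) else x ord0 (s i)).

Definition pt_image (f : pt -> pt) (P : pt -> Prop) : pt -> Prop :=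
  fun y => exists x, P x /\ y = f x.

End Defs.

From mathcomp Require Import all_boot all_order all_algebra all_fingroup.
From mathcomp Require Import reals boolp.
From mathcomp Require Import lra zify.
Import Order.TTheory GRing.Theory Num.Theory.
Local Open Scope ring_scope.

(* Reflecting the coordinates that are identically 1 on P yields a
   (0,1)-polytope Q none of whose coordinates is identically 1, so if Q is a
   single point it is the origin, the empty product.  If Q = P1 + P2 is a
   nontrivial sum of lattice polytopes, then in every coordinate one summand
   is constant: a lattice polytope that is not constant in a coordinate
   varies by at least 1 there, so otherwise Q would vary by 2 in a coordinate
   with values in [0,1].  Hence Q is the direct product of its projections
   onto the coordinates where P2 is constant and onto the remaining ones.
   Both are again (0,1)-polytopes with no coordinate identically 1 and with
   fewer coordinates not identically 0, and induction on that number
   concludes. *)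

Section ZeroOnePolytopes.
Local Set Implicit Arguments. Local Unset Strict Implicit.
Variables (R : realType) (d : nat).
Local Notation pt := 'rV[R]_d.
Implicit Types (S : seq pt) (P Q A B : pt -> Prop) (x y v : pt) (i : 'I_d).

Lemma nth_cat_cases (T : Type) (x0 : T) (s1 s2 : seq T) j :
  (j < size (s1 ++ s2))%N ->
  (j < size s1)%N /\ nth x0 (s1 ++ s2) j = nth x0 s1 j \/
  exists j', [/\ (j' < size s2)%N, j = (size s1 + j')%N
                & nth x0 (s1 ++ s2) j = nth x0 s2 j'].
Proof.
rewrite size_cat nth_cat; case: (ltnP j (size s1)) => [lt_j1 _ | le1j lt_j].
  by left.
by right; exists (j - size s1)%N; split=> //; lia.
Qed.

Definition coord_eq P i (c : R) := forall x, P x -> x ord0 i = c.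

Definition coord_const P i := forall x y, P x -> P y -> x ord0 i = y ord0 i.

Lemma sum_scale_entry (I : Type) (r : seq I) (lam : I -> R) (F : I -> pt) i :
  (\sum_(k <- r) lam k *: F k) ord0 i = \sum_(k <- r) lam k * F k ord0 i.
Proof. by rewrite summxE; apply: eq_bigr => k _; rewrite mxE. Qed.

Lemma conv_mem S v : v \in S -> conv S v.
Proof.
move=> Sv; have lt_vS : (index v S < size S)%N by rewrite index_mem.
pose k0 := Ordinal lt_vS.
exists (fun k => if k == k0 then 1 else 0); split; [|split].
- by move=> k; case: (k == k0).
- by rewrite -big_mkcond big_pred1_eq.
- under eq_bigr do rewrite (fun_if (fun a => a *: _)) scale1r scale0r.
  by rewrite -big_mkcond big_pred1_eq nth_index.
Qed.

Lemma conv_coord_eq S i c :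
  (forall v, v \in S -> v ord0 i = c) -> coord_eq (conv S) i c.
Proof.
move=> Sc _ [lam [_ [lam1 ->]]]; rewrite sum_scale_entry.
rewrite (eq_bigr (fun k => lam k * c)) => [|k _].
  by rewrite -mulr_suml lam1 mul1r.
by rewrite Sc //; apply/mem_nth/ltn_ord.
Qed.

Lemma conv_coord_bound S i x :
  (forall v, v \in S -> 0 <= v ord0 i <= 1) -> conv S x -> 0 <= x ord0 i <= 1.
Proof.
move=> S01 [lam [lam_ge0 [lam1 ->]]]; rewrite sum_scale_entry; apply/andP; split.
- apply: sumr_ge0 => k _; apply: mulr_ge0 => //.
  by case/andP: (S01 _ (mem_nth 0 (ltn_ord k))).
- rewrite -lam1; apply: ler_sum => k _; rewrite ler_piMr //.
  by case/andP: (S01 _ (mem_nth 0 (ltn_ord k))).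
Qed.

(* Convex combinations indexed by [nat] instead of ['I_(size S)], so that
   [conv_nat (map f S)] can be compared with [conv_nat S] without casts. *)
Definition conv_nat S x : Prop :=
  exists lam : nat -> R, (forall k, (k < size S)%N -> 0 <= lam k) /\
    \sum_(0 <= k < size S) lam k = 1 /\ x = \sum_(0 <= k < size S) lam k *: S`_k.

Lemma conv_natE S : conv S = conv_nat S.
Proof.
apply: funext => x; apply: propext; split.
- move=> [lam [lam_ge0 [lam1 ->]]].
  exists (fun k => if insub k is Some k' then lam k' else 0); split; [|split].
  + by move=> k lt_kS; rewrite insubT.
  + by rewrite big_mkord -lam1; apply: eq_bigr => k _; rewrite valK.
  + by rewrite big_mkord; apply: eq_bigr => k _; rewrite valK.
- move=> [lam [lam_ge0 [lam1 ->]]].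
  exists (fun k => lam (val k)); split; [|split].
  + by move=> k; apply/lam_ge0/ltn_ord.
  + by rewrite -lam1 big_mkord.
  + by rewrite big_mkord.
Qed.

Definition coordwise_affine (f : pt -> pt) :=
  exists (a b : 'I_d -> R) (s : 'I_d -> 'I_d),
    forall x, f x = \row_i (a i + b i * x ord0 (s i)).

Lemma coordwise_affine_comb (f : pt -> pt) n (lam : nat -> R) (F : nat -> pt) :
  coordwise_affine f -> \sum_(0 <= k < n) lam k = 1 ->
  f (\sum_(0 <= k < n) lam k *: F k) = \sum_(0 <= k < n) lam k *: f (F k).
Proof.
move=> [a [b [s fE]]] lam1; apply/rowP => i.
rewrite fE mxE !sum_scale_entry.
under [RHS]eq_bigr do rewrite fE mxE mulrDr.
rewrite big_split /= -mulr_suml lam1 mul1r mulr_sumr; congr (_ + _).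
by apply: eq_bigr => k _; rewrite mulrCA.
Qed.

Lemma image_conv (f : pt -> pt) S :
  coordwise_affine f -> pt_image f (conv S) = conv (map f S).
Proof.
move=> f_aff; rewrite !conv_natE; apply: funext => y; apply: propext.
have mapE (lam : nat -> R) : \sum_(0 <= k < size S) lam k *: (map f S)`_k =
                             \sum_(0 <= k < size S) lam k *: f S`_k.
  by apply: eq_big_nat => k /andP [_ lt_kS]; rewrite (nth_map 0).
split.
- move=> [_ [[lam [lam_ge0 [lam1 ->]]] ->]].
  exists lam; rewrite size_map mapE; split; [|split] => //.
  exact: coordwise_affine_comb.
- move=> [lam []]; rewrite size_map mapE => lam_ge0 [lam1 ->].
  exists (\sum_(0 <= k < size S) lam k *: S`_k); split; first by exists lam.
  by rewrite coordwise_affine_comb.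
Qed.

Lemma zero_one_polytope_image (f : pt -> pt) P :
  coordwise_affine f -> (forall v, zero_one_point v -> zero_one_point (f v)) ->
  zero_one_polytope P -> zero_one_polytope (pt_image f P).
Proof.
move=> f_aff f01 [S [S_nil [S01 ->]]]; exists (map f S); split; [|split].
- by case: S S_nil {S01}.
- by move=> _ /mapP [v Sv ->]; apply/f01/S01.
- exact: image_conv.
Qed.

Lemma zero_one_polytope_lattice P : zero_one_polytope P -> lattice_polytope P.
Proof.
move=> [S [S_nil [S01 ->]]]; exists S; split; [|split] => // v Sv i.
by case: (S01 v Sv i) => ->; [exists 0 | exists 1].
Qed.

Lemma lattice_polytope_nonempty P : lattice_polytope P -> exists x, P x.
Proof.
move=> [[|v S] [S_nil [_ ->]]] //; exists v; exact/conv_mem/mem_head.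
Qed.

Lemma zero_one_polytope_coord_bound Q x i :
  zero_one_polytope Q -> Q x -> 0 <= x ord0 i <= 1.
Proof.
move=> [S [_ [S01 ->]]]; apply: conv_coord_bound => v Sv.
by case: (S01 v Sv i) => ->; rewrite lexx ler01.
Qed.

Lemma zero_one_polytope_single_point Q v :
  zero_one_polytope Q -> Q = (fun x => x = v) -> zero_one_point v.
Proof.
move=> [[|w S] [S_nil [S01 ->]]] // Qv.
have := conv_mem (mem_head w S); rewrite Qv => <-; exact/S01/mem_head.
Qed.

Lemma lattice_polytope_coord_gap P i :
  lattice_polytope P -> ~ coord_const P i ->
  exists u w, [/\ P u, P w & u ord0 i + 1 <= w ord0 i].
Proof.
move=> [[|v0 S] [S_nil [Slat ->]]] // P_nconst.
have [v Sv v_ne] : exists2 v, v \in v0 :: S & v ord0 i != v0 ord0 i.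
  apply/allPn/negP => /allP Sc; apply: P_nconst => x y Px Py.
  have Sc' v : v \in v0 :: S -> v ord0 i = v0 ord0 i by move/Sc/eqP.
  by rewrite (conv_coord_eq Sc' Px) (conv_coord_eq Sc' Py).
have [[z vz] [z0 v0z]] := (Slat v Sv i, Slat v0 (mem_head _ _) i).
move: v_ne; rewrite vz v0z eqr_int => /lt_total/orP[] lt_z.
- exists v, v0; split; [exact: conv_mem | exact/conv_mem/mem_head |].
  by rewrite vz v0z -(intrD _ _ 1) ler_int lezD1.
- exists v0, v; split; [exact/conv_mem/mem_head | exact: conv_mem |].
  by rewrite vz v0z -(intrD _ _ 1) ler_int lezD1.
Qed.

Lemma exists_nonconst_coord P :
  (exists x, P x) -> ~ is_single_point P -> exists i, ~ coord_const P i.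
Proof.
move=> [v Pv] P_npt; apply: contra_notP P_npt => P_const; exists v.
apply: funext => x; apply: propext; split=> [Px | ->] //.
apply/rowP => i; apply: contrapT => xv_ne; apply: P_const; exists i => Pi.
exact/xv_ne/Pi.
Qed.

Lemma not_indecomposable P :
  lattice_polytope P -> ~ is_single_point P -> ~ indecomposable P ->
  exists P1 P2, [/\ lattice_polytope P1, lattice_polytope P2, P = minkowski P1 P2,
                    ~ is_single_point P1 & ~ is_single_point P2].
Proof.
move=> Plat P_npt P_dec; apply: contra_notP P_dec => no_split.
split=> //; split=> // P1 P2 P1lat P2lat PE.
apply: contra_notP no_split => /not_orP [P1_npt P2_npt]; by exists P1, P2.
Qed.

Lemma minkowski_comm A B : minkowski A B = minkowski B A.
Proof.
apply: funext => x; apply: propext.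
by split=> [] [p [q [Ap [Bq ->]]]]; exists q, p; rewrite addrC.
Qed.

Lemma minkowski_assoc A B C :
  minkowski A (minkowski B C) = minkowski (minkowski A B) C.
Proof.
apply: funext => x; apply: propext; split.
- move=> [a [_ [Aa [[b [c [Bb [Cc ->]]]] ->]]]].
  by exists (a + b), c; rewrite addrA; split => //; exists a, b.
- move=> [_ [c [[a [b [Aa [Bb ->]]]] [Cc ->]]]].
  by exists a, (b + c); rewrite addrA; split => //; split => //; exists b, c.
Qed.

Lemma minkowski0l A : minkowski (fun x => x = 0) A = A.
Proof.
apply: funext => x; apply: propext; split.
- by move=> [_ [q [-> [Aq ->]]]]; rewrite add0r.
- by move=> Ax; exists 0, x; rewrite add0r.
Qed.

Lemma minkowski_list_cat (As Bs : seq (pt -> Prop)) :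
  minkowski_list (As ++ Bs) = minkowski (minkowski_list As) (minkowski_list Bs).
Proof.
elim: As => [|A As IH] /=; first by rewrite minkowski0l.
by rewrite IH minkowski_assoc.
Qed.

Lemma minkowski_proj_zero A B i :
  (exists y, B y) -> proj_zero (minkowski A B) i -> coord_const A i.
Proof.
move=> [q Bq] AB0 x y Ax Ay.
have : (x + q) ord0 i = (y + q) ord0 i.
  by rewrite (AB0 (x + q)) ?(AB0 (y + q)); [| exists y, q | exists x, q].
by rewrite !mxE => /addIr.
Qed.

Lemma zero_one_summand_coord_const Q P1 P2 i :
  zero_one_polytope Q -> lattice_polytope P1 -> lattice_polytope P2 ->
  Q = minkowski P1 P2 -> coord_const P1 i \/ coord_const P2 i.
Proof.
move=> Q01 P1lat P2lat QE.
case: (pselect (coord_const P1 i)) => [|P1_nconst]; first by left.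
case: (pselect (coord_const P2 i)) => [|P2_nconst]; first by right.
have [u1 [w1 [P1u P1w gap1]]] := lattice_polytope_coord_gap P1lat P1_nconst.
have [u2 [w2 [P2u P2w gap2]]] := lattice_polytope_coord_gap P2lat P2_nconst.
have /andP [ge0 _] : 0 <= (u1 + u2) ord0 i <= 1.
  by apply: zero_one_polytope_coord_bound Q01 _; rewrite QE; exists u1, u2.
have /andP [_ le1] : 0 <= (w1 + w2) ord0 i <= 1.
  by apply: zero_one_polytope_coord_bound Q01 _; rewrite QE; exists w1, w2.
rewrite !mxE in ge0 le1; exfalso; clear -ge0 le1 gap1 gap2; lra.
Qed.

Definition coord_proj (J : 'I_d -> bool) x : pt :=
  \row_i (if J i then x ord0 i else 0).

Lemma minkowski_coord_split Q P1 P2 (J : 'I_d -> bool) :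
  (forall i, J i -> coord_const P2 i) -> (forall i, ~~ J i -> coord_const P1 i) ->
  Q = minkowski P1 P2 ->
  Q = minkowski (pt_image (coord_proj J) Q) (pt_image (coord_proj (fun i => ~~ J i)) Q).
Proof.
move=> P2_const P1_const ->; apply: funext => z; apply: propext; split.
- move=> Qz; exists (coord_proj J z), (coord_proj (fun i => ~~ J i) z).
  split; [by exists z | split; [by exists z |]].
  by apply/rowP => i; rewrite !mxE; case: (J i); rewrite ?addr0 ?add0r.
- move=> [_ [_ [[x [PPx ->]] [[y [PPy ->]] ->]]]].
  have [p [q [P1p [P2q ->]]]] := PPx; have [p' [q' [P1p' [P2q' ->]]]] := PPy.
  exists p, q'; split => //; split => //.
  apply/rowP => i; rewrite !mxE; case: (boolP (J i)) => Ji /=; rewrite ?addr0 ?add0r.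
  + by rewrite (P2_const i Ji q q').
  + by rewrite (P1_const i Ji p' p).
Qed.

Lemma coord_proj_affine J : coordwise_affine (coord_proj J).
Proof.
exists (fun _ => 0), (fun i => if J i then 1 else 0), id => x.
by apply/rowP => i; rewrite !mxE; case: (J i); rewrite add0r ?mul1r ?mul0r.
Qed.

Lemma zero_one_polytope_proj J Q :
  zero_one_polytope Q -> zero_one_polytope (pt_image (coord_proj J) Q).
Proof.
apply: zero_one_polytope_image; first exact: coord_proj_affine.
by move=> v v01 i; rewrite mxE; case: (J i) => //; left.
Qed.

Lemma proj_zero_proj J Q i :
  proj_zero Q i -> proj_zero (pt_image (coord_proj J) Q) i.
Proof. by move=> Q0 _ [x [Qx ->]]; rewrite mxE Q0 // if_same. Qed.

Lemma proj_zero_proj_out J Q i :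
  ~~ J i -> proj_zero (pt_image (coord_proj J) Q) i.
Proof. by move=> Ji _ [x [Qx ->]]; rewrite mxE (negbTE Ji). Qed.

Definition no_const_one Q := forall i, ~ coord_eq Q i 1.

Lemma no_const_one_proj J Q :
  (exists x, Q x) -> no_const_one Q -> no_const_one (pt_image (coord_proj J) Q).
Proof.
move=> [x Qx] Q_nc1 i JQ1; have := JQ1 _ (ex_intro _ x (conj Qx erefl)).
rewrite mxE; case: ifP => [Ji _ | _ /eqP]; last by rewrite eq_sym oner_eq0.
apply: (Q_nc1 i) => y Qy.
by have := JQ1 _ (ex_intro _ y (conj Qy erefl)); rewrite mxE Ji.
Qed.

Lemma single_point_no_const_one Q :
  zero_one_polytope Q -> no_const_one Q -> is_single_point Q ->
  Q = (fun x => x = 0).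
Proof.
move=> Q01 Q_nc1 [v QE]; suff v0 : v = 0 by rewrite QE v0.
have v01 := zero_one_polytope_single_point Q01 QE.
apply/rowP => i; rewrite mxE; case: (v01 i) => // vi1.
by case: (Q_nc1 i); rewrite QE => _ ->.
Qed.

Definition support_card Q := #|[set i | `[< ~ proj_zero Q i >]]|.

Lemma support_card_lt Q Q' i :
  (forall i, proj_zero Q i -> proj_zero Q' i) -> proj_zero Q' i -> ~ proj_zero Q i ->
  (support_card Q' < support_card Q)%N.
Proof.
move=> QQ' Q'0 Q_n0; apply/proper_card/properP; split.
  apply/subsetP => k; rewrite !inE => /asboolP Q'k; apply/asboolP => Qk.
  by apply: Q'k; apply: QQ'.
by exists i; rewrite !inE; [apply/asboolP | apply/negP => /asboolP].
Qed.

Lemma zero_one_decomposable_split Q :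
  zero_one_polytope Q -> ~ is_single_point Q -> ~ indecomposable Q ->
  exists J : 'I_d -> bool,
    let QJ := pt_image (coord_proj J) Q in
    let QJc := pt_image (coord_proj (fun i => ~~ J i)) Q in
    [/\ Q = minkowski QJ QJc, (support_card QJ < support_card Q)%N
      & (support_card QJc < support_card Q)%N].
Proof.
move=> Q01 Q_npt Q_dec.
have [P1 [P2 [P1lat P2lat QE P1_npt P2_npt]]] :=
  not_indecomposable (zero_one_polytope_lattice Q01) Q_npt Q_dec.
have P_const i := zero_one_summand_coord_const i Q01 P1lat P2lat QE.
have P1ne := lattice_polytope_nonempty P1lat.
have P2ne := lattice_polytope_nonempty P2lat.
pose J i := `[< coord_const P2 i >].
have P2_const i : J i -> coord_const P2 i by move/asboolP.
have P1_const i : ~~ J i -> coord_const P1 i by move/asboolPn; case: (P_const i).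
exists J; split; first exact: minkowski_coord_split QE.
- have [i P2_nconst] := exists_nonconst_coord P2ne P2_npt.
  apply: (support_card_lt (i := i)); first exact: proj_zero_proj.
    by apply: proj_zero_proj_out; apply/asboolPn.
  by rewrite QE minkowski_comm => /(minkowski_proj_zero P1ne).
- have [i P1_nconst] := exists_nonconst_coord P1ne P1_npt.
  apply: (support_card_lt (i := i)); first exact: proj_zero_proj.
    by apply: proj_zero_proj_out; rewrite negbK; apply/asboolP; case: (P_const i).
  by rewrite QE => /(minkowski_proj_zero P2ne).
Qed.

Local Notation piece Ps j := (nth (fun _ : pt => False) Ps j).

Definition product_decomposition Q (Ps : seq (pt -> Prop)) :=
  [/\ forall j, (j < size Ps)%N ->
        zero_one_polytope (piece Ps j) /\ indecomposable (piece Ps j),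
      forall j i, (j < size Ps)%N -> proj_zero Q i -> proj_zero (piece Ps j) i
    & is_direct_product Q Ps].

Lemma product_decomposition_nil Q :
  Q = (fun x => x = 0) -> product_decomposition Q [::].
Proof. by move=> QE; split=> //; split. Qed.

Lemma product_decomposition_indecomposable Q :
  zero_one_polytope Q -> indecomposable Q -> product_decomposition Q [:: Q].
Proof.
move=> Q01 Q_ind; split; [by case | by case |].
by split; [case=> [|j] [|k] | rewrite /= minkowski_comm minkowski0l].
Qed.

Lemma product_decomposition_cat Q A B PsA PsB :
  Q = minkowski A B -> (forall i, proj_zero A i \/ proj_zero B i) ->
  (forall i, proj_zero Q i -> proj_zero A i /\ proj_zero B i) ->
  product_decomposition A PsA -> product_decomposition B PsB ->
  product_decomposition Q (PsA ++ PsB).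
Proof.
move=> QE AB_disj AB_supp [A_pieces A_supp [A_disj AE]] [B_pieces B_supp [B_disj BE]].
split.
- by move=> j /(nth_cat_cases (fun _ => False)) [[lt_j ->] | [j' [lt_j' _ ->]]]; auto.
- move=> j i /(nth_cat_cases (fun _ => False)) [[lt_j ->] | [j' [lt_j' _ ->]]].
    by move=> /AB_supp [A0 _]; apply: A_supp.
  by move=> /AB_supp [_ B0]; apply: B_supp.
- split; last by rewrite QE AE BE minkowski_list_cat.
  move=> j k /(nth_cat_cases (fun _ => False)) [[lt_j ->] | [j' [lt_j' -> ->]]]
             /(nth_cat_cases (fun _ => False)) [[lt_k ->] | [k' [lt_k' -> ->]]] jk i.
  + exact: A_disj.
  + by case: (AB_disj i) => [/(A_supp j i lt_j) | /(B_supp k' i lt_k')]; auto.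
  + by case: (AB_disj i) => [/(A_supp k i lt_k) | /(B_supp j' i lt_j')]; auto.
  + by apply: B_disj => // jk'; apply: jk; rewrite jk'.
Qed.

Lemma zero_one_product_decomposition Q :
  zero_one_polytope Q -> no_const_one Q -> exists Ps, product_decomposition Q Ps.
Proof.
move En : (support_card Q) => n; elim/ltn_ind: n Q En => n IH Q Qn Q01 Q_nc1; subst n.
have Qne := lattice_polytope_nonempty (zero_one_polytope_lattice Q01).
case: (pselect (is_single_point Q)) => [Q_pt | Q_npt].
  by exists [::]; apply/product_decomposition_nil/single_point_no_const_one.
case: (pselect (indecomposable Q)) => [Q_ind | Q_dec].
  by exists [:: Q]; apply: product_decomposition_indecomposable.
have [J [QE ltJ ltJc]] := zero_one_decomposable_split Q01 Q_npt Q_dec.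
have [PsJ decJ] := IH _ ltJ _ erefl (zero_one_polytope_proj J Q01)
                      (no_const_one_proj Qne Q_nc1).
have [PsJc decJc] := IH _ ltJc _ erefl (zero_one_polytope_proj _ Q01)
                        (no_const_one_proj Qne Q_nc1).
exists (PsJ ++ PsJc); apply: product_decomposition_cat QE _ _ decJ decJc.
- move=> i; case: (boolP (J i)) => Ji; [right | left];
    by apply: proj_zero_proj_out; rewrite ?negbK.
- by move=> i Q0; split; apply: proj_zero_proj.
Qed.

Lemma coord_change_affine s flip : coordwise_affine (coord_change s flip).
Proof.
exists (fun i => if flip i then 1 else 0), (fun i => if flip i then -1 else 1), s => x.
by apply/rowP => i; rewrite !mxE; case: (flip i); rewrite ?add0r ?mul1r ?mulN1r.
Qed.

Lemma zero_one_polytope_coord_change s flip P :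
  zero_one_polytope P -> zero_one_polytope (pt_image (coord_change s flip) P).
Proof.
apply: zero_one_polytope_image; first exact: coord_change_affine.
move=> v v01 i; rewrite mxE.
by case: (flip i); case: (v01 (s i)) => ->; rewrite ?subr0 ?subrr;
  [right | left | left | right].
Qed.

Lemma no_const_one_flip P :
  zero_one_polytope P ->
  no_const_one (pt_image (coord_change 1 (fun i => `[< coord_eq P i 1 >])) P).
Proof.
move=> P01 i P'1.
have [x Px] := lattice_polytope_nonempty (zero_one_polytope_lattice P01).
have := P'1 _ (ex_intro _ x (conj Px erefl)); rewrite mxE perm1.
case: asboolP => [P_one | P_n1 _].
  by rewrite P_one // subrr => /eqP; rewrite eq_sym oner_eq0.
apply: P_n1 => y Py.
have := P'1 _ (ex_intro _ y (conj Py erefl)); rewrite mxE perm1.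
by case: asboolP => // P_one _; apply: P_one.
Qed.

End ZeroOnePolytopes.

Theorem lemma4p1 (R : realType) (d : nat) (P : 'rV[R]_d -> Prop) :
  zero_one_polytope P ->
  exists (s : 'S_d) (flip : 'I_d -> bool) (Ps : seq ('rV[R]_d -> Prop)),
    (forall j : nat, (j < size Ps)%N ->
       zero_one_polytope (nth (fun _ => False) Ps j) /\
       indecomposable (nth (fun _ => False) Ps j)) /\
    is_direct_product (pt_image (coord_change s flip) P) Ps.
Proof.
move=> P01.
have [Ps [Ps_pieces _ Ps_prod]] := zero_one_product_decomposition
  (zero_one_polytope_coord_change 1 _ P01) (no_const_one_flip P01).
by exists 1%g, (fun i => `[< coord_eq P i 1 >]), Ps.
Qed.
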